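(* Let $\mathcal V$ be a finite alphabet, $\mathcal V^*$ the set of finite strings over $\mathcal V$, $e$ an environment, and $p(c,t)$ a joint distribution over implementations $c\in\mathcal V^*$ and test suites $t\in\mathcal V^*$ with marginals $p(c)$ and $p(t)$. Let $R(c,t\mid e):=\frac{1}{|t|}\sum_{k=1}^{|t|}O_k(c,t\mid e)\in[0,1]$. Define the functional equivalence classes $\mathcal N_c^\infty:=\{c'\in\mathcal V^*: O(c,t\mid e)=O(c',t\mid e)\text{ for all } t \text{ with } p(t)>0\}$ and $p(\mathcal N_c^\infty):=\sum_{c'\in\mathcal N_c^\infty}p(c')$. Assume: (i) (code-test calibration) $p(\mathcal N_c^\infty)=\mathbb P_{t\sim p}[R(c,t\mid e)=1]$ for every $c\in\mathcal V^*$; (ii) (well-specification) for $t\sim p$, almost surely there exists exactly one equivalence class $\mathcal N_c^\infty$ such that $R(c,t\mid e)=1$. For a set of $k$ distinct equivalence classes $\{\mathcal N_{c_i}^\infty\}_{i=1}^k$ define $\mathrm{Pass@k}(\{\mathcal N_{c_i}^\infty\}_{i=1}^k):=\mathbb P_{t\sim p}[\exists\, i\in\{1,\dots,k\}: R(c_i,t\mid e)=1]$. Then $\mathrm{Pass@k}$ is maximized (over all choices of $k$ distinct equivalence classes) by greedily selecting the $k$ classes $\mathcal N_c^\infty$ with the largest values of $p(\mathcal N_c^\infty)$.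
   Context: A test suite $t\in\mathcal V^*$ consists of $|t|\ge1$ test cases. For an environment $e$, an implementation $c$ and a test suite $t$, the test harness returns a deterministic output vector $O(c,t\mid e)=(O_1(c,t\mid e),\dots,O_{|t|}(c,t\mid e))\in\{0,1\}^{|t|}$, where $0$ indicates failure and $1$ success of the $k$-th test case. Codes in the same class $\mathcal N_c^\infty$ have the same value of $R(\cdot,t\mid e)$ for all $t$ with $p(t)>0$. *)

From HB Require Import structures.
From mathcomp Require Import all_boot all_order all_algebra.
From mathcomp Require Import all_classical all_reals all_analysis.
Set Implicit Arguments. Unset Strict Implicit. Unset Printing Implicit Defensive.
Import Order.TTheory GRing.Theory Num.Theory.
Local Open Scope classical_set_scope.
Local Open Scope ring_scope.
Local Open Scope ereal_scope.

(* Conventions: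
   - strings over the finite alphabet V are [seq V];
   - [ncases t] is the number |t| of test cases of test suite t;
   - [O e c t] is the deterministic output vector in {0,1}^|t| (a tuple of bools);
   - [p c t] is the (real, nonnegative, total mass 1) joint probability mass
     of (c, t); probabilities are countable sums [esum] in the extended reals. *)

Definition marg_c {R : realType} {V : finType} (p : seq V -> seq V -> R)
  (c : seq V) : \bar R := \esum_(t in [set: seq V]) (p c t)%:E.

Definition marg_t {R : realType} {V : finType} (p : seq V -> seq V -> R)
  (t : seq V) : \bar R := \esum_(c in [set: seq V]) (p c t)%:E.

Definition prob_t {R : realType} {V : finType} (p : seq V -> seq V -> R)
  (A : set (seq V)) : \bar R := \esum_(t in A) marg_t p t.

Definition Rscore {R : realType} {V : finType} {E : Type} {ncases : seq V -> nat}
  (O : E -> forall c t : seq V, (ncases t).-tuple bool) (e : E)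
  (c t : seq V) : R :=
  ((\sum_(k < ncases t) ((tnth (O e c t) k : nat)%:R : R)) / (ncases t)%:R)%R.

Definition eqclass {R : realType} {V : finType} {E : Type} {ncases : seq V -> nat}
  (O : E -> forall c t : seq V, (ncases t).-tuple bool) (e : E)
  (p : seq V -> seq V -> R) (c : seq V) : set (seq V) :=
  [set c' | forall t, 0 < marg_t p t -> O e c t = O e c' t].

Definition p_class {R : realType} {V : finType} {E : Type} {ncases : seq V -> nat}
  (O : E -> forall c t : seq V, (ncases t).-tuple bool) (e : E)
  (p : seq V -> seq V -> R) (c : seq V) : \bar R :=
  \esum_(c' in eqclass O e p c) marg_c p c'.

Definition pass_at_k {R : realType} {V : finType} {E : Type} {ncases : seq V -> nat}
  (O : E -> forall c t : seq V, (ncases t).-tuple bool) (e : E)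
  (p : seq V -> seq V -> R) (k : nat) (cs : 'I_k -> seq V) : \bar R :=
  prob_t p [set t | exists i : 'I_k, @Rscore R _ _ _ O e (cs i) t = 1%R].

From HB Require Import structures.
From mathcomp Require Import all_boot all_order all_algebra.
From mathcomp Require Import all_classical all_reals all_analysis.
Import Order.TTheory GRing.Theory Num.Theory.
Local Open Scope classical_set_scope.
Local Open Scope ring_scope.
Local Open Scope ereal_scope.

(* By well-specification, almost every test suite is passed by exactly one
   class, so the pass events of distinct classes overlap only on a null set and
   Pass@k is additive: by calibration it is the sum of the masses p(N) of the
   chosen classes.  Maximizing a sum of k distinct class masses is solved by
   the greedy choice through an exchange argument: classes chosen by both
   selections contribute equally, and every other class of a competing
   selection weighs at most the last greedy pick, which in turn weighs at most
   each greedy pick. *)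

Lemma le_term_esum (R : realType) (T : choiceType) (A : set T) (f : T -> \bar R)
  (t : T) : A t -> f t <= \esum_(x in A) f x.
Proof.
move=> At; apply: esum_ge; exists [set t]; last by rewrite fsbig_set1.
by split; [exact: finite_set1 | move=> x ->].
Qed.

Lemma esum_bigcup_ord (R : realType) (T : choiceType) (k : nat)
  (f : T -> \bar R) (A : 'I_k -> set T) :
  (forall t, 0 <= f t) ->
  (forall t, 0 < f t -> forall i j, A i t -> A j t -> i = j) ->
  \esum_(t in [set t | exists i, A i t]) f t = \sum_(i < k) \esum_(t in A i) f t.
Proof.
move=> f_ge0 A_disj.
rewrite esum_mkcond; under eq_bigr do rewrite esum_mkcond.
rewrite -esum_sum; last by move=> t i _ _; case: ifP.
apply: eq_esum => t _.
have [ft0|ft_neq0] := eqVneq (f t) 0.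
  by rewrite ft0 big1 => [|i _]; case: ifP.
have ft_gt0 : 0 < f t by rewrite lt_def ft_neq0 f_ge0.
have [[i Ait]|noAt] := pselect (exists i, A i t); last first.
  rewrite ifF; last by apply/negbTE/negP => /set_mem.
  rewrite big1 // => i _; rewrite ifF //.
  by apply/negbTE/negP => /set_mem Ait; apply: noAt; exists i.
rewrite ifT; last by rewrite inE; exists i.
rewrite (bigD1 i) //= ifT ?inE // big1 ?adde0 // => j neq_ji.
case: ifP => // /set_mem Ajt.
by rewrite (A_disj t ft_gt0 _ _ Ajt Ait) eqxx in neq_ji.
Qed.

Lemma lee_sum_matching (R : realDomainType) (I : finType) (f g : I -> \bar R)
  (m : \bar R) (M : {set I}) (h : I -> I) :
  {in M &, injective h} -> {in M, forall i, f i = g (h i)} ->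
  {in ~: M, forall i, f i <= m} -> (forall j, m <= g j) ->
  \sum_i f i <= \sum_i g i.
Proof.
move=> h_inj f_matched f_unmatched m_le_g.
have sum_notin (A : {set I}) (F : I -> \bar R) :
    \sum_(i | i \notin A) F i = \sum_(i in ~: A) F i.
  by apply: eq_bigl => i; rewrite finset.in_setC.
rewrite (bigID (mem M)) [X in _ <= X](bigID (mem (h @: M))) /= !sum_notin.
apply: leeD; first by rewrite big_imset //= (eq_bigr _ f_matched).
have card_unmatched : #|~: M| = #|~: (h @: M)|.
  by apply/eqP; rewrite -(eqn_add2l #|M|) cardsC -{1}(card_in_imset h_inj) cardsC.
apply: le_trans (lee_sum _ f_unmatched) _.
by rewrite sumr_const card_unmatched -sumr_const; apply: lee_sum.
Qed.

Section GreedyChoice.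
Variables (R : realDomainType) (Y X : Type) (F : Y -> X) (W : X -> \bar R).

Definition greedy_choice {k : nat} (cs : 'I_k -> Y) : Prop :=
  forall (i : 'I_k) (c : Y),
    (forall j : 'I_k, (j < i)%N -> F c <> F (cs j)) -> W (F c) <= W (F (cs i)).

Lemma greedy_nonincreasing (k : nat) (cs : 'I_k -> Y) :
  injective (F \o cs) -> greedy_choice cs ->
  forall i j : 'I_k, (i <= j)%N -> W (F (cs j)) <= W (F (cs i)).
Proof.
move=> cs_distinct cs_greedy i j le_ij; apply: cs_greedy => j' lt_j'i.
by move/cs_distinct=> eq_jj'; move: lt_j'i; rewrite -eq_jj' ltnNge le_ij.
Qed.

Lemma greedy_sum_max (k : nat) (cs ds : 'I_k -> Y) :
  injective (F \o cs) -> greedy_choice cs -> injective (F \o ds) ->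
  \sum_(i < k) W (F (ds i)) <= \sum_(i < k) W (F (cs i)).
Proof.
case: k cs ds => [|n] cs ds cs_distinct cs_greedy ds_distinct.
  by rewrite !big_ord0.
pose M := [set i | `[< exists j, F (ds i) = F (cs j) >]]%SET.
pose h i := odflt i [pick j | `[< F (ds i) = F (cs j) >]].
have hE i : i \in M -> F (ds i) = F (cs (h i)).
  rewrite inE => /asboolP[j eq_ij]; rewrite /h.
  by case: pickP => [j' /asboolP // | /(_ j)]; rewrite (asboolT eq_ij).
apply: (@lee_sum_matching _ _ _ _ (W (F (cs ord_max))) M h).
- move=> i i' iM i'M eq_h; apply: ds_distinct.
  by rewrite /= (hE _ iM) (hE _ i'M) eq_h.
- by move=> i iM; rewrite /= hE.
- move=> i; rewrite finset.in_setC inE => /asboolP iM.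
  by apply: cs_greedy => j _ eq_ij; apply: iM; exists j.
- by move=> j; apply: greedy_nonincreasing => //; rewrite -ltnS.
Qed.

End GreedyChoice.

Section PassAtK.
Variables (R : realType) (V : finType) (E : Type) (ncases : seq V -> nat)
  (O : E -> forall c t : seq V, (ncases t).-tuple bool) (e : E)
  (p : seq V -> seq V -> R).

Local Notation passes c t := (@Rscore R _ _ _ O e c t = 1%R).
Local Notation class := (eqclass O e p).

Hypothesis p_ge0 : forall c t, (0 <= p c t)%R.
Hypothesis calibration : forall c,
  p_class O e p c = prob_t p [set t | passes c t].
Hypothesis well_specified :
  prob_t p [set t | ~ (exists c, passes c t /\
                       forall c', passes c' t -> class c' = class c)] = 0.

Lemma marg_t_ge0 t : 0 <= marg_t p t.
Proof. by apply: esum_ge0 => c _; rewrite lee_fin. Qed.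

Lemma passing_class_unique t : 0 < marg_t p t ->
  exists c, passes c t /\ forall c', passes c' t -> class c' = class c.
Proof.
move=> t_pos; apply: contrapT => t_bad.
have : marg_t p t <= 0 by rewrite -well_specified; exact: le_term_esum.
by rewrite leNgt t_pos.
Qed.

Lemma pass_at_k_sum (k : nat) (cs : 'I_k -> seq V) :
  injective (class \o cs) ->
  pass_at_k O e p cs = \sum_(i < k) p_class O e p (cs i).
Proof.
move=> cs_distinct; under eq_bigr do rewrite calibration.
apply: esum_bigcup_ord => [|t t_pos i j pass_i pass_j]; first exact: marg_t_ge0.
have [c [_ class_c]] := passing_class_unique _ t_pos.
by apply: cs_distinct; rewrite /= (class_c _ pass_i) (class_c _ pass_j).
Qed.

End PassAtK.

Local Close Scope ereal_scope.

Theorem proposition4p13 (R : realType) (V : finType) (E : Type)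
  (ncases : seq V -> nat)
  (O : E -> forall c t : seq V, (ncases t).-tuple bool) (e : E)
  (p : seq V -> seq V -> R)
  (ncases_pos : forall t, (0 < ncases t)%N)
  (p_ge0 : forall c t, 0 <= p c t)
  (p_sum1 : (\esum_(x in [set: seq V * seq V]) (p x.1 x.2)%:E = 1)%E)
  (calibration : forall c,
     p_class O e p c = prob_t p [set t | @Rscore R _ _ _ O e c t = 1])
  (well_specified :
     prob_t p [set t | ~ (exists c, @Rscore R _ _ _ O e c t = 1 /\
                 forall c', @Rscore R _ _ _ O e c' t = 1 -> eqclass O e p c' = eqclass O e p c)]
     = 0%E)
  (k : nat) (cs : 'I_k -> seq V)
  (cs_distinct : forall i j : 'I_k, eqclass O e p (cs i) = eqclass O e p (cs j) -> i = j)
  (cs_greedy : forall (i : 'I_k) (c : seq V),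
     (forall j : 'I_k, (j < i)%N -> eqclass O e p c <> eqclass O e p (cs j)) ->
     (p_class O e p c <= p_class O e p (cs i))%E) :
  forall ds : 'I_k -> seq V,
    (forall i j : 'I_k, eqclass O e p (ds i) = eqclass O e p (ds j) -> i = j) ->
    (pass_at_k O e p ds <= pass_at_k O e p cs)%E.
Proof.
move=> ds ds_distinct.
rewrite !pass_at_k_sum //.
exact: (@greedy_sum_max _ _ _ (eqclass O e p)
         (fun N => \esum_(c in N) marg_c p c)).
Qed.
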